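(* The constantly rebalanced portfolio strategy $\mathrm{CRP}$ and the constantly rebalanced portfolio strategy with side information $\mathrm{CRP}_{\mathrm{side}}$ (for any side-information vectors $\mathbf v_t$ and any function $\mathbf f$ as below) are universalizable.
   Context: Market with $m\ge2$ assets and return vectors $\mathbf x_t\in(0,\infty)^m$, $t\ge0$. $\mathcal W_m=\{\mathbf w\in[0,1]^m:\sum_i w_i=1\}$. $\mathrm{CRP}$ has parameter space $\mathcal W_m$ and description $\mathrm{CRP}_t(\mathbf w)=\mathbf w$. $\mathrm{CRP}_{\mathrm{side}}$: given $k\ge1$, side-information vectors $\mathbf v_t\in\mathbb R^{q}$ and a function $\mathbf f=(f_1,\dots,f_k):\mathbb R^q\to[0,1]^k$ with $\sum_j f_j\equiv1$, its parameter space is $\mathcal W_m^k$ and its description is $\mathrm{CRP}_{\mathrm{side},t}(\mathbf w_1,\dots,\mathbf w_k)=\sum_{j=1}^k f_j(\mathbf v_t)\mathbf w_j$. General notions: for a strategy $S$ with parameter space $\mathbb W$ (a finite product of simplices) and descriptions $S_t(\mathbf w)\in\mathcal W_m$, $\mathcal R_n(S(\mathbf w))=\prod_{t=0}^{n-1}S_t(\mathbf w)\cdot\mathbf x_t$ ($\mathcal R_0\equiv1$), $\mathcal L_n=\frac1n\log\mathcal R_n$, similarly for parameter-free strategies. $\mu$ is the uniform probability measure on $\mathbb W$ and $\mathcal U(S)$ has $\mathcal U_t(S)=\int_{\mathbb W}S_t\mathcal R_t\,d\mu/\int_{\mathbb W}\mathcal R_t\,d\mu$. $U$ is a universalization of $S$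 if there is $\eta_n\to0$, independent of market data, with $\mathcal L_n(U)\ge\sup_{\mathbf w}\mathcal L_n(S(\mathbf w))-\eta_n$ for all $n$ and all market data. The $\varepsilon$-modification is $\bar S_t(\mathbf w)=(1-\frac{\varepsilon}{2(t+1)^2})S_t(\mathbf w)+\frac{\varepsilon}{2m(t+1)^2}(1,\dots,1)$; $S$ is universalizable if for every $\varepsilon\in(0,1)$, $\mathcal U(\bar S)$ is a universalization of $S$. *)

From HB Require Import structures.
From mathcomp Require Import all_boot all_order all_algebra.
From mathcomp Require Import all_classical all_reals all_analysis.
Set Implicit Arguments. Unset Strict Implicit. Unset Printing Implicit Defensive.
Import Order.TTheory GRing.Theory Num.Theory.
Import numFieldNormedType.Exports.
Local Open Scope classical_set_scope.
Local Open Scope ring_scope.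

Section Portfolio.
Variable R : realType.

Definition simplex (m : nat) : set ('I_m -> R) :=
  [set p | (forall i, 0 <= p i <= 1) /\ \sum_(i < m) p i = 1].

Definition paramW (m k : nat) : set ('I_k -> 'I_m -> R) :=
  [set w | forall j, simplex (w j)].

(** For the nonnegative measurable
    integrands used below this is the integral w.r.t. n-dim Lebesgue
    measure on [0,1]^n (Tonelli). *)
Fixpoint cube_int (n : nat) (f : seq R -> \bar R) : \bar R :=
  match n with
  | 0 => f [::]
  | n'.+1 => (\int[@lebesgue_measure R]_(y in `[0%R, 1%R]) cube_int n' (fun s => f (y :: s)))%E
  end.

Definition simplex_embed (m : nat) (y : seq R) : 'I_m -> R :=
  fun i => if (i < m.-1)%N then nth 0 y i else 1 - \sum_(a <- y) a.

(** Integral over W_m with respect to ((m-1)-dimensional) Lebesgue measure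
    in the chart above (unnormalized uniform measure). *)
Definition simplex_int (m : nat) (g : ('I_m -> R) -> \bar R) : \bar R :=
  cube_int m.-1 (fun y => if (\sum_(a <- y) a <= 1) && all (fun a => 0 <= a) y
                          then g (@simplex_embed m y) else 0%E).

Fixpoint prod_simplex_int (m k : nat) (G : seq ('I_m -> R) -> \bar R) : \bar R :=
  match k with
  | 0 => G [::]
  | k'.+1 => @simplex_int m (fun w => @prod_simplex_int m k' (fun W => G (w :: W)))
  end.

Definition paramW_int (m k : nat) (G : ('I_k -> 'I_m -> R) -> \bar R) : \bar R :=
  @prod_simplex_int m k (fun W => G (fun j => nth (fun _ => 0) W j)).

Definition unif_int (m k : nat) (G : ('I_k -> 'I_m -> R) -> \bar R) : \bar R :=
  (@paramW_int m k G * ((fine (@paramW_int m k (fun _ => 1%E)))^-1)%:E)%E.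

(** Market data: x t i is the return of asset i at time t. *)
Definition market (m : nat) := nat -> 'I_m -> R.
Definition market_ok (m : nat) (x : market m) := forall t i, 0 < x t i.

Definition pstrategy (m : nat) := nat -> 'I_m -> R.
Definition strategy (m k : nat) := nat -> ('I_k -> 'I_m -> R) -> 'I_m -> R.

Definition dotp (m : nat) (a b : 'I_m -> R) : R := \sum_(i < m) a i * b i.

Definition wealth (m : nat) (x : market m) (b : pstrategy m) (n : nat) : R :=
  \prod_(t < n) dotp (b t) (x t).

Definition growth (m : nat) (x : market m) (b : pstrategy m) (n : nat) : R :=
  ln (wealth x b n) / n%:R.

Definition at_param (m k : nat) (S : strategy m k) (w : 'I_k -> 'I_m -> R) : pstrategy m :=
  fun t => S t w.

Definition univ (m k : nat) (S : strategy m k) (x : market m) : pstrategy m :=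
  fun t i =>
    fine (unif_int (fun w => (S t w i * wealth x (at_param S w) t)%:E)) /
    fine (unif_int (fun w => (wealth x (at_param S w) t)%:E)).

Definition is_universalization (m k : nat) (S : strategy m k)
    (U : market m -> pstrategy m) : Prop :=
  exists eta : nat -> R, eta @ \oo --> 0 /\
    forall x : market m, market_ok x -> forall n : nat, (0 < n)%N ->
      ((growth x (U x) n)%:E >=
         ereal_sup [set (growth x (at_param S w) n)%:E | w in @paramW m k]
         - (eta n)%:E)%E.

Definition eps_mod (m k : nat) (eps : R) (S : strategy m k) : strategy m k :=
  fun t w i => (1 - eps / (2 * (t.+1)%:R ^+ 2)) * S t w i
               + eps / (2 * m%:R * (t.+1)%:R ^+ 2).

Definition universalizable (m k : nat) (S : strategy m k) : Prop :=
  forall eps : R, 0 < eps < 1 -> is_universalization S (univ (eps_mod eps S)).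

(** CRP: parameter space W_m (identified with W_m^1), CRP_t(w) = w. *)
Definition CRP (m : nat) : strategy m 1 := fun t w => w ord0.

Definition CRP_side (m k q : nat) (v : nat -> 'I_q -> R)
    (f : ('I_q -> R) -> 'I_k -> R) : strategy m k :=
  fun t w i => \sum_(j < k) f (v t) j * w j i.

End Portfolio.

From HB Require Import structures.
From mathcomp Require Import all_boot all_order all_algebra.
From mathcomp Require Import all_classical all_reals all_analysis.
From mathcomp Require Import measurable_realfun.
From mathcomp.algebra_tactics Require Import ring lra.
Import Order.TTheory GRing.Theory Num.Theory numFieldNormedType.Exports.
Set Implicit Arguments. Unset Strict Implicit. Unset Printing Implicit Defensive.
Local Open Scope classical_set_scope.
Local Open Scope ring_scope.

(* The universal strategy built from the eps-modification S' of S has wealth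
   R_n(U) = (int R_n(S'(w)) dw) / vol(W), the average of the wealths of its
   constituents.  Since CRP_side is linear in w with nonnegative weights, every
   w >= (1 - a) w0 (coordinatewise) satisfies
   R_n(S'(w)) >= (1 - a)^n * prod_t (1 - eps / (2 (t+1)^2)) * R_n(S(w0)),
   and in the chart of W_m^k by a cube these w contain a box of side a / (m - 1).
   With a = 1 / (n + 1) the average loses at most a factor
   ((m - 1)(n + 1))^-(k (m - 1) + 2), and vol(W) <= 1, so the regret is at most
   (k (m - 1) + 2) ln((m - 1)(n + 1)) / n <= 4 (k (m - 1) + 2) sqrt((m - 1) / (n + 1)),
   uniformly in the market and in w0.  CRP is the case k = 1.  The integrals
   over W_m^k are iterated Lebesgue integrals over a cube, computed with Tonelli,
   which is why joint measurability is tracked along the way. *)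

Section JointMeasurability.
Variable R : realType.

(* [jmeasurable n F]: (t, y_1, ..., y_n) |-> F t [:: y_1; ...; y_n] is
   measurable on (((T * R) * R) ... * R). *)
Fixpoint jmeasurable (n : nat) : forall d (T : measurableType d), (T -> seq R -> R) -> Prop :=
  match n with
  | 0 => fun d T F => measurable_fun setT (fun t => F t [::])
  | n'.+1 => fun d T F => @jmeasurable n' _ (T * R)%type (fun p s => F p.1 (p.2 :: s))
  end.

Lemma eq_jmeasurable n : forall d (T : measurableType d) (F G : T -> seq R -> R),
  (forall t s, size s = n -> F t s = G t s) -> jmeasurable n G -> jmeasurable n F.
Proof.
elim: n => [|n IH] d T F G FG /=.
  by move=> mG; apply: eq_measurable_fun mG => t _; rewrite FG.
by apply: IH => p s hs; rewrite FG //= hs.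
Qed.

Lemma jmeasurable_reparam n : forall d (T : measurableType d) d' (T' : measurableType d')
  (F : T -> seq R -> R) (phi : T' -> T),
  measurable_fun setT phi -> jmeasurable n F -> jmeasurable n (fun t s => F (phi t) s).
Proof.
elim: n => [|n IH] d T d' T' F phi mphi /=.
  by move=> mF; exact: measurableT_comp mF mphi.
move=> mF; apply: (IH _ _ _ _ _ (fun p : T' * R => (phi p.1, p.2))) mF.
apply: measurable_fun_pair; last exact: measurable_snd.
exact: measurableT_comp mphi measurable_fst.
Qed.

Lemma jmeasurable_cst n : forall d (T : measurableType d) (h : T -> R),
  measurable_fun setT h -> jmeasurable n (fun t (_ : seq R) => h t).
Proof.
elim: n => [|n IH] d T h mh //=.
by apply: (IH _ _ (fun p => h p.1)); exact: measurableT_comp mh measurable_fst.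
Qed.

Lemma jmeasurable_const n d (T : measurableType d) (c : R) :
  jmeasurable n (fun (_ : T) (_ : seq R) => c).
Proof. exact/jmeasurable_cst/measurable_cst. Qed.

Lemma jmeasurableD n : forall d (T : measurableType d) (F G : T -> seq R -> R),
  jmeasurable n F -> jmeasurable n G -> jmeasurable n (fun t s => F t s + G t s).
Proof.
elim: n => [|n IH] d T F G /=; first exact: measurable_realfun.measurable_funD.
exact: IH.
Qed.

Lemma jmeasurableM n : forall d (T : measurableType d) (F G : T -> seq R -> R),
  jmeasurable n F -> jmeasurable n G -> jmeasurable n (fun t s => F t s * G t s).
Proof.
elim: n => [|n IH] d T F G /=; first exact: measurable_realfun.measurable_funM.
exact: IH.
Qed.

Lemma jmeasurableT_comp n : forall d (T : measurableType d) (F : T -> seq R -> R) (h : R -> R),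
  measurable_fun setT h -> jmeasurable n F -> jmeasurable n (fun t s => h (F t s)).
Proof.
elim: n => [|n IH] d T F h mh /=; last by move=> mF; exact: IH.
by move=> mF; exact: measurableT_comp mh mF.
Qed.

Lemma jmeasurable_nth n : forall d (T : measurableType d) i,
  jmeasurable n (fun (_ : T) s => nth 0 s i).
Proof.
elim: n => [|n IH] d T i /=.
  by under eq_fun do rewrite nth_nil; exact: measurable_cst.
case: i => [|i]; last exact: (eq_jmeasurable (G := fun p s => nth 0 s i)).
by apply: (eq_jmeasurable (G := fun p _ => p.2)) => //; apply: jmeasurable_cst; exact: measurable_snd.
Qed.

Lemma jmeasurable_sum n d (T : measurableType d) (I : Type) (r : seq I) (P : pred I)
  (F : I -> T -> seq R -> R) :
  (forall i, jmeasurable n (F i)) -> jmeasurable n (fun t s => \sum_(i <- r | P i) F i t s).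
Proof.
move=> mF; elim: r => [|a r IHr].
  by apply: (eq_jmeasurable (G := fun _ _ => 0)) => [t s _|]; [rewrite big_nil|exact: jmeasurable_const].
apply: (eq_jmeasurable (G := fun t s => (if P a then F a t s else 0) + \sum_(i <- r | P i) F i t s)).
  by move=> t s _; rewrite big_cons; case: (P a); rewrite ?add0r.
by apply: jmeasurableD => //; case: (P a) => //; exact: jmeasurable_const.
Qed.

Lemma jmeasurable_prod n d (T : measurableType d) (I : Type) (r : seq I) (P : pred I)
  (F : I -> T -> seq R -> R) :
  (forall i, jmeasurable n (F i)) -> jmeasurable n (fun t s => \prod_(i <- r | P i) F i t s).
Proof.
move=> mF; elim: r => [|a r IHr].
  by apply: (eq_jmeasurable (G := fun _ _ => 1)) => [t s _|]; [rewrite big_nil|exact: jmeasurable_const].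
apply: (eq_jmeasurable (G := fun t s => (if P a then F a t s else 1) * \prod_(i <- r | P i) F i t s)).
  by move=> t s _; rewrite big_cons; case: (P a); rewrite ?mul1r.
by apply: jmeasurableM => //; case: (P a) => //; exact: jmeasurable_const.
Qed.

End JointMeasurability.

Section CubeIntegral.
Variable R : realType.
Local Notation mu := (@lebesgue_measure R).
Local Open Scope ereal_scope.

Lemma cube_int_ge0 n : forall (F : seq R -> \bar R), (forall s, 0 <= F s) -> 0 <= cube_int n F.
Proof.
elim: n => [|n IH] F F0 //=.
by apply: integral_ge0 => y _; apply: IH.
Qed.

(* Integrands carry a parameter [t] because the induction step integrates the
   sections (t, y) |-> F t (y :: s), whose measurability is needed jointly. *)
Lemma measurable_cube_int n : forall d (T : measurableType d) (F : T -> seq R -> R),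
  jmeasurable n F -> (forall t s, (0 <= F t s)%R) ->
  measurable_fun setT ((fun t => cube_int n (fun s => (F t s)%:E)) : T -> \bar R).
Proof.
elim: n => [|n IH] d T F mF F0 /=; first exact/measurable_EFinP.
pose g (p : T * R) := (\1_(`[0%R, 1%R]) p.2)%:E * cube_int n (fun s => (F p.1 (p.2 :: s))%:E).
have mg : measurable_fun setT g.
  apply: emeasurable_funM; last exact: IH _ _ (fun p s => F p.1 (p.2 :: s)) mF (fun p s => F0 _ _).
  by apply/measurable_EFinP; exact: measurableT_comp (measurable_indic _) measurable_snd.
have g0 p : 0 <= g p.
  by rewrite mule_ge0 ?lee_fin //; apply: cube_int_ge0 => s; rewrite lee_fin.
have := @measurable_fun_fubini_tonelli_F _ _ T (measurableTypeR R) R mu g mg g0.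
apply: eq_measurable_fun => t _; rewrite /fubini_F [RHS]integral_mkcond.
apply: eq_integral => y _; rewrite /g /patch /= indicE.
by case: (y \in _) => /=; rewrite ?mul1e ?mul0e.
Qed.

Lemma measurable_cube_int_cons n d (T : measurableType d) (F : T -> seq R -> R) t :
  jmeasurable n.+1 F -> (forall t s, (0 <= F t s)%R) ->
  measurable_fun (`[0%R, 1%R] : set (measurableTypeR R))
    ((fun y => cube_int n (fun s => (F t (y :: s))%:E)) : _ -> \bar R).
Proof.
move=> mF F0; apply: (measurable_funS measurableT) => //.
exact: (measurable_cube_int (F := fun y s => F t (y :: s)))
  (jmeasurable_reparam (F := fun p s => F p.1 (p.2 :: s)) (pair1_measurable t) mF)
  (fun _ _ => F0 _ _).
Qed.

Lemma cube_intD n : forall d (T : measurableType d) (F G : T -> seq R -> R) t,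
  jmeasurable n F -> jmeasurable n G ->
  (forall t s, (0 <= F t s)%R) -> (forall t s, (0 <= G t s)%R) ->
  cube_int n (fun s => (F t s + G t s)%:E) =
  cube_int n (fun s => (F t s)%:E) + cube_int n (fun s => (G t s)%:E).
Proof.
elim: n => [|n IH] d T F G t mF mG F0 G0 /=; first by rewrite EFinD.
rewrite -ge0_integralD //; last 4 first.
- by move=> y _; apply: cube_int_ge0 => s; rewrite lee_fin.
- exact: measurable_cube_int_cons.
- by move=> y _; apply: cube_int_ge0 => s; rewrite lee_fin.
- exact: measurable_cube_int_cons.
apply: eq_integral => y _.
exact: (IH _ _ (fun p s => F p.1 (p.2 :: s)) (fun p s => G p.1 (p.2 :: s)) (t, y)
  mF mG (fun _ _ => F0 _ _) (fun _ _ => G0 _ _)).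
Qed.

Lemma cube_intZ n : forall d (T : measurableType d) (F : T -> seq R -> R) t (c : R),
  (0 <= c)%R -> jmeasurable n F -> (forall t s, (0 <= F t s)%R) ->
  cube_int n (fun s => (c * F t s)%:E) = c%:E * cube_int n (fun s => (F t s)%:E).
Proof.
elim: n => [|n IH] d T F t c c0 mF F0 /=; first by rewrite EFinM.
rewrite -ge0_integralZl_EFin //; last 2 first.
- by move=> y _; apply: cube_int_ge0 => s; rewrite lee_fin.
- exact: measurable_cube_int_cons.
apply: eq_integral => y _.
exact: (IH _ _ (fun p s => F p.1 (p.2 :: s)) (t, y) c c0 mF (fun _ _ => F0 _ _)).
Qed.

Lemma le_cube_int n : forall d (T : measurableType d) (F G : T -> seq R -> R) t,
  jmeasurable n F -> jmeasurable n G ->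
  (forall t s, (0 <= F t s)%R) -> (forall t s, (0 <= G t s)%R) ->
  (forall s, size s = n -> (F t s <= G t s)%R) ->
  cube_int n (fun s => (F t s)%:E) <= cube_int n (fun s => (G t s)%:E).
Proof.
elim: n => [|n IH] d T F G t mF mG F0 G0 FG /=; first by rewrite lee_fin FG.
apply: ge0_le_integral => //.
- by move=> y _; apply: cube_int_ge0 => s; rewrite lee_fin.
- exact: measurable_cube_int_cons.
- exact: measurable_cube_int_cons.
move=> y _; apply: (IH _ _ (fun p s => F p.1 (p.2 :: s)) (fun p s => G p.1 (p.2 :: s)) (t, y)
  mF mG (fun _ _ => F0 _ _) (fun _ _ => G0 _ _)).
by move=> s hs; apply: FG => /=; rewrite hs.
Qed.

Lemma cube_int_cst n (c : R) : cube_int n (fun _ => c%:E) = c%:E.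
Proof.
elim: n => [|n IH] //=; under eq_integral do rewrite IH.
have mu01 : mu `[0%R, 1%R] = 1 by rewrite lebesgue_measure_itv /= lte_fin ltr01 oppr0 adde0.
by rewrite integral_cst //= mu01 mule1.
Qed.

Lemma integral_itv01_indic (K a b : R) : (0 <= K)%R -> (0 <= a <= b)%R -> (b <= 1)%R ->
  \int[mu]_(y in `[0%R, 1%R]) (K * \1_(`[a, b]) y)%:E = (K * (b - a))%:E.
Proof.
move=> K0 /andP[a0 ab] b1.
under eq_integral do rewrite EFinM.
rewrite ge0_integralZl_EFin //; last exact/measurable_EFinP/measurable_indic.
rewrite integral_indic // setIidl; last first.
  by move=> y /=; rewrite !in_itv /= => /andP[h1 h2]; rewrite (le_trans a0 h1) (le_trans h2 b1).
have /= -> := @lebesgue_measure_itv R `[a, b]; case: ltP => [_|]; first by rewrite -EFinD -EFinM.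
by rewrite lee_fin => ba; rewrite (@le_anti _ _ a b) ?ab ?ba // subrr mulr0 mule0.
Qed.

Lemma cube_int_box n : forall d (T : measurableType d) (F : T -> seq R -> R) t (a b : nat -> R) (c : R),
  jmeasurable n F -> (forall t s, (0 <= F t s)%R) -> (0 <= c)%R ->
  (forall i, (0 <= a i <= b i)%R /\ (b i <= 1)%R) ->
  (forall s, size s = n -> (forall i, (i < n)%N -> (a i <= nth 0%R s i <= b i)%R) ->
     (c <= F t s)%R) ->
  (c * \prod_(i < n) (b i - a i))%:E <= cube_int n (fun s => (F t s)%:E).
Proof.
elim: n => [|n IH] d T F t a b c mF F0 c0 hab hF /=.
  by rewrite big_ord0 mulr1 lee_fin; apply: hF.
set K := (c * \prod_(i < n) (b i.+1 - a i.+1))%R.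
have K0 : (0 <= K)%R.
  rewrite /K mulr_ge0 // prodr_ge0 // => i _.
  by have [/andP[_ h] _] := hab i.+1; rewrite subr_ge0.
have [hab0 hb0] := hab 0%N.
have hK y : (K * \1_(`[a 0%N, b 0%N]) y)%:E <= cube_int n (fun s => (F t (y :: s))%:E).
  rewrite indicE; case: (boolP (y \in _)) => hy; last first.
    by rewrite mulr0; apply: cube_int_ge0 => s; rewrite lee_fin.
  rewrite mulr1; apply: (IH _ _ (fun p s => F p.1 (p.2 :: s)) (t, y) (fun i => a i.+1)
    (fun i => b i.+1) c mF (fun _ _ => F0 _ _) c0 (fun i => hab i.+1)).
  move=> s hs hi /=; apply: hF => /=; first by rewrite hs.
  by case=> [_|i /hi //]; move: hy; rewrite inE /= in_itv.
apply: le_trans (ge0_le_integral mu (measurable_itv _) _ _ _ (fun y _ => hK y)).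
- rewrite integral_itv01_indic // big_ord_recl /= /K lee_fin.
  under eq_bigr do rewrite /bump leq0n add1n.
  by rewrite mulrCA mulrC.
- by move=> y _; rewrite lee_fin mulr_ge0.
- exact/measurable_EFinP/measurable_funM/measurable_indic.
- exact: measurable_cube_int_cons.
Qed.

Lemma cube_int_sum n d (T : measurableType d) (I : Type) (r : seq I) (c : I -> R)
  (F : I -> T -> seq R -> R) t :
  (forall i, (0 <= c i)%R) -> (forall i, jmeasurable n (F i)) ->
  (forall i t s, (0 <= F i t s)%R) ->
  cube_int n (fun s => (\sum_(i <- r) c i * F i t s)%:E) =
  \sum_(i <- r) (c i)%:E * cube_int n (fun s => (F i t s)%:E).
Proof.
move=> c0 mF F0; elim: r => [|a r IHr].
  by rewrite big_nil; under [X in cube_int _ X]funext do rewrite big_nil; exact: cube_int_cst.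
rewrite big_cons -IHr -(cube_intZ (F := F a) t (c0 a) (mF a) (F0 a)).
rewrite -(cube_intD (F := fun t s => (c a * F a t s)%R)
  (G := fun t s => (\sum_(i <- r) c i * F i t s)%R)).
- by congr cube_int; apply: funext => s; rewrite big_cons.
- by apply: jmeasurableM => //; exact: jmeasurable_const.
- by apply: jmeasurable_sum => i; apply: jmeasurableM => //; exact: jmeasurable_const.
- by move=> ? ?; rewrite mulr_ge0.
- by move=> ? ?; apply: sumr_ge0 => i _; rewrite mulr_ge0.
Qed.

Lemma cube_int_cat a : forall b (F : seq R -> \bar R),
  cube_int (a + b) F = cube_int a (fun s => cube_int b (fun s' => F (s ++ s'))).
Proof.
elim: a => [|a IH] b F //=.
by apply: eq_integral => y _; exact: (IH b (fun s => F (y :: s))).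
Qed.

Lemma eq_cube_int n : forall (F G : seq R -> \bar R),
  (forall s, size s = n -> F s = G s) -> cube_int n F = cube_int n G.
Proof.
elim: n => [|n IH] F G FG /=; first exact: FG.
by apply: eq_integral => y _; apply: IH => s hs; apply: FG => /=; rewrite hs.
Qed.

End CubeIntegral.

Section SimplexCharts.
Variables (R : realType) (m' : nat).
Local Notation m := m'.+2.
Local Notation d := m'.+1.

Definition in_chart (y : seq R) : bool := (\sum_(a <- y) a <= 1) && all (fun a => 0 <= a) y.

Fixpoint chart_params (k : nat) (s : seq R) : seq ('I_m -> R) :=
  match k with
  | 0 => [::]
  | k'.+1 => @simplex_embed R m (take d s) :: chart_params k' (drop d s)
  end.

Fixpoint in_charts (k : nat) (s : seq R) : bool :=
  match k with 0 => true | k'.+1 => in_chart (take d s) && in_charts k' (drop d s) end.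

Lemma prod_simplex_int_cube k : forall (G : seq ('I_m -> R) -> \bar R),
  @prod_simplex_int R m k G =
  cube_int (k * d) (fun s => if in_charts k s then G (chart_params k s) else 0%E).
Proof.
elim: k => [|k IH] G //.
rewrite mulSn cube_int_cat [LHS]/= /simplex_int; apply: eq_cube_int => y hy.
rewrite IH; case: ifP => hy1; last rewrite -[LHS](cube_int_cst (k * d) 0%R);
  by apply: eq_cube_int => s hs; rewrite /= take_size_cat // drop_size_cat // /in_chart hy1.
Qed.

Lemma sum_ord_nth (y : seq R) n : (size y <= n)%N -> \sum_(i < n) nth 0 y i = \sum_(a <- y) a.
Proof.
elim: y n => [|a y IH] n hn; first by rewrite big_nil big1 // => i _; rewrite nth_nil.
case: n hn => [//|n] /= hn.
by rewrite big_ord_recl big_cons /= IH.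
Qed.

Lemma sum_simplex_embed (y : seq R) : (size y <= d)%N -> \sum_(i < m) @simplex_embed R m y i = 1.
Proof.
move=> hy; rewrite big_ord_recr /= /simplex_embed /= ltnn.
under eq_bigr => i _ do rewrite /= ltn_ord.
by rewrite sum_ord_nth // addrC subrK.
Qed.

Lemma simplex_embed_ge0 (y : seq R) i : in_chart y -> 0 <= @simplex_embed R m y i.
Proof.
case/andP => hs /allP ha; rewrite /simplex_embed /=.
case: ifP => _; last by rewrite subr_ge0.
have [hi|hi] := ltnP i (size y); first by apply: ha; exact: mem_nth.
by rewrite nth_default.
Qed.

Lemma simplex_embedP (y : seq R) : in_chart y -> (size y <= d)%N -> simplex (@simplex_embed R m y).
Proof.
move=> hc hy; split; last exact: sum_simplex_embed.
move=> i; rewrite simplex_embed_ge0 //= -(sum_simplex_embed hy) (bigD1 i) //= lerDl.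
by apply: sumr_ge0 => j _; exact: simplex_embed_ge0.
Qed.

Lemma size_take_d (s : seq R) : (size (take d s) <= d)%N.
Proof. by rewrite size_take; case: ltnP => // /ltnW. Qed.

Lemma chart_params_simplex k : forall s, in_charts k s -> forall j, (j < k)%N ->
  simplex (nth (fun _ => 0) (chart_params k s) j).
Proof.
elim: k => [|k IH] s //= /andP[hc hC] [|j] hj /=; last exact: IH.
by apply: simplex_embedP => //; exact: size_take_d.
Qed.

Lemma nth_chart_params k : forall s j (i : 'I_m), size s = (k * d)%N -> (j < k)%N ->
  nth (fun _ => 0) (chart_params k s) j i =
  if (i < d)%N then nth 0 s (j * d + i) else 1 - \sum_(i' < d) nth 0 s (j * d + i').
Proof.
elim: k => [|k IH] s j i hs hj //; move: hs; rewrite mulSn => hs.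
case: j hj => [|j] hj /=.
  rewrite /simplex_embed /= mul0n add0n; case: ifP => hi; first by rewrite nth_take.
  rewrite -(sum_ord_nth (size_take_d s)).
  by congr (_ - _); apply: eq_bigr => i' _; rewrite nth_take.
rewrite IH //; last by rewrite size_drop hs addKn.
rewrite !nth_drop mulSn; case: ifP => _; first by rewrite addnA.
by congr (_ - _); apply: eq_bigr => i' _; rewrite nth_drop addnA.
Qed.

Definition in_block (s : seq R) (j : nat) : bool :=
  (\sum_(i < d) nth 0 s (j * d + i) <= 1) && [forall i : 'I_d, 0 <= nth 0 s (j * d + i)].

Lemma in_chart_take (s : seq R) : (d <= size s)%N -> in_chart (take d s) = in_block s 0.
Proof.
move=> hs; rewrite /in_chart /in_block -(sum_ord_nth (size_take_d s)).
under eq_bigr => i _ do rewrite nth_take // -[i : nat]add0n -(mul0n d).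
congr andb; apply/(all_nthP 0)/forallP => [H i|H i].
  by rewrite mul0n add0n -(nth_take 0 (ltn_ord i)) H // size_takel.
by rewrite size_takel // => hi; rewrite nth_take //; have := H (Ordinal hi); rewrite mul0n add0n.
Qed.

Lemma in_chartsP k : forall s, size s = (k * d)%N ->
  in_charts k s <-> (forall j, (j < k)%N -> in_block s j).
Proof.
elim: k => [|k IH] s hs //=; move: hs; rewrite mulSn => hs.
rewrite in_chart_take ?hs ?leq_addr //.
have hD : size (drop d s) = (k * d)%N by rewrite size_drop hs addKn.
have eD j : in_block (drop d s) j = in_block s j.+1.
  rewrite /in_block mulSn.
  by congr andb; [congr (_ <= _); apply: eq_bigr => i _ | apply: eq_forallb => i];
    rewrite nth_drop addnA.
split; first by case/andP => h0 /(IH _ hD) H [|j] hj //; rewrite -eD; exact: H.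
by move=> H; rewrite H //=; apply/(IH _ hD) => j hj; rewrite eD; exact: H.
Qed.

End SimplexCharts.

Lemma measurable_natr_le (R : realType) (a : R) : measurable_fun setT (fun x : R => (x <= a)%R%:R : R).
Proof.
apply: (eq_measurable_fun (\1_(`]-oo, a]) : R -> R)); last exact: measurable_indic.
by move=> x _; rewrite indicE mem_setE in_itv.
Qed.

Lemma measurable_natr_ge (R : realType) (a : R) : measurable_fun setT (fun x : R => (a <= x)%R%:R : R).
Proof.
apply: (eq_measurable_fun (\1_(`[a, +oo[) : R -> R)); last exact: measurable_indic.
by move=> x _; rewrite indicE mem_setE in_itv /= andbT.
Qed.

Section CubePullback.
Variables (R : realType) (m' k : nat).
Local Notation m := m'.+2.
Local Notation d := m'.+1.
Local Notation param := ('I_k -> 'I_m -> R).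

Definition param_measurable (h : param -> R) : Prop :=
  forall n dd (T : measurableType dd) (w : T -> seq R -> param),
    (forall j i, jmeasurable n (fun t s => w t s j i)) -> jmeasurable n (fun t s => h (w t s)).

Lemma param_measurable_coord j i : param_measurable (fun w => w j i).
Proof. by move=> n dd T w H; exact: H. Qed.

Lemma param_measurable_cst c : param_measurable (fun _ => c).
Proof. by move=> n dd T w H; exact: jmeasurable_const. Qed.

Lemma param_measurableD h1 h2 :
  param_measurable h1 -> param_measurable h2 -> param_measurable (fun w => h1 w + h2 w).
Proof. by move=> g1 g2 n dd T w H; apply: jmeasurableD; [exact: g1|exact: g2]. Qed.

Lemma param_measurableM h1 h2 :
  param_measurable h1 -> param_measurable h2 -> param_measurable (fun w => h1 w * h2 w).
Proof. by move=> g1 g2 n dd T w H; apply: jmeasurableM; [exact: g1|exact: g2]. Qed.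

Lemma param_measurable_sum (I : Type) (r : seq I) (P : pred I) (h : I -> param -> R) :
  (forall i, param_measurable (h i)) -> param_measurable (fun w => \sum_(i <- r | P i) h i w).
Proof. by move=> g n dd T w H; apply: jmeasurable_sum => i; exact: g. Qed.

Lemma param_measurable_prod (I : Type) (r : seq I) (P : pred I) (h : I -> param -> R) :
  (forall i, param_measurable (h i)) -> param_measurable (fun w => \prod_(i <- r | P i) h i w).
Proof. by move=> g n dd T w H; apply: jmeasurable_prod => i; exact: g. Qed.

(* On sequences of length [k * d], [cube_pullback h] is
   [block_indicator * h \o block_param] (lemma [jmeasurable_cube_pullback]),
   a form whose joint measurability is evident. *)
Definition block_param (s : seq R) : param := fun j i =>
  if (i < d)%N then nth 0 s (j * d + i) else 1 - \sum_(i' < d) nth 0 s (j * d + i').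

Definition block_indicator (s : seq R) : R :=
  \prod_(j < k) ((\sum_(i < d) nth 0 s (j * d + i) <= 1)%R%:R *
                 \prod_(i < d) (0 <= nth 0 s (j * d + i))%R%:R).

Definition cube_param (s : seq R) : param := fun j => nth (fun _ => 0) (chart_params m' k s) j.

Definition cube_pullback (h : param -> R) (s : seq R) : R :=
  if in_charts m' k s then h (cube_param s) else 0.

Lemma cube_paramE s : size s = (k * d)%N -> cube_param s = block_param s.
Proof. by move=> hs; apply/funext => j; apply/funext => i; rewrite /cube_param nth_chart_params. Qed.

Lemma block_indicatorE s : size s = (k * d)%N -> block_indicator s = (in_charts m' k s)%:R.
Proof.
move=> hs; rewrite /block_indicator; have [hC|hC] := boolP (in_charts m' k s).
  have H := (in_chartsP hs).1 hC.
  rewrite big1 // => j _; have /andP[-> /forallP h0] := H j (ltn_ord j).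
  by rewrite mul1r big1 // => i _; rewrite h0.
have [j hj] : exists j : 'I_k, ~~ in_block m' s j.
  apply/existsP; apply: contraNT hC; rewrite negb_exists => /forallP H.
  by apply/(in_chartsP hs) => j hj; have := H (Ordinal hj); rewrite negbK.
rewrite (bigD1 j) //=; case/nandP: hj => [/negbTE ->|/forallPn [i /negbTE hi]].
  by rewrite !mul0r.
by rewrite [X in _ * X * _](bigD1 i) //= hi mul0r mulr0 mul0r.
Qed.

Lemma jmeasurable_block_param n dd (T : measurableType dd) j i :
  jmeasurable n (fun (_ : T) s => block_param s j i).
Proof.
rewrite /block_param; case: (i < d)%N; first exact: jmeasurable_nth.
apply: jmeasurableD; first exact: jmeasurable_const.
apply: (jmeasurableT_comp (h := fun x => - x)); first exact: oppr_measurable.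
by apply: jmeasurable_sum => i'; exact: jmeasurable_nth.
Qed.

Lemma jmeasurable_block_indicator n dd (T : measurableType dd) :
  jmeasurable n (fun (_ : T) s => block_indicator s).
Proof.
apply: jmeasurable_prod => j; apply: jmeasurableM.
  apply: (jmeasurableT_comp (h := fun x => (x <= 1)%R%:R)); first exact: measurable_natr_le.
  by apply: jmeasurable_sum => i; exact: jmeasurable_nth.
apply: jmeasurable_prod => i.
apply: (jmeasurableT_comp (h := fun x => (0 <= x)%R%:R)); first exact: measurable_natr_ge.
exact: jmeasurable_nth.
Qed.

Lemma jmeasurable_cube_pullback h :
  param_measurable h -> jmeasurable (k * d) (fun (_ : unit) s => cube_pullback h s).
Proof.
move=> mh; apply: (eq_jmeasurable (G := fun _ s => block_indicator s * h (block_param s))).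
  move=> _ s hs; rewrite block_indicatorE // /cube_pullback cube_paramE //.
  by case: ifP; rewrite ?mul1r ?mul0r.
apply: jmeasurableM; first exact: jmeasurable_block_indicator.
by apply: mh => j i; exact: jmeasurable_block_param.
Qed.

Lemma cube_pullback_ge0 h : (forall w, (forall j i, 0 <= w j i) -> 0 <= h w) ->
  forall s, 0 <= cube_pullback h s.
Proof.
move=> h0 s; rewrite /cube_pullback; case: ifP => // hC; apply: h0 => j i.
by case: (chart_params_simplex hC (ltn_ord j)) => /(_ i) /andP[].
Qed.

Lemma paramW_int_cube (h : param -> R) :
  @paramW_int R m k (fun w => (h w)%:E) = cube_int (k * d) (fun s => (cube_pullback h s)%:E).
Proof.
rewrite /paramW_int prod_simplex_int_cube; apply: eq_cube_int => s _.
by rewrite /cube_pullback; case: ifP.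
Qed.

End CubePullback.

Lemma simplex_params_ge0 (R : realType) m k (w : 'I_k -> 'I_m -> R) :
  (forall j, simplex (w j)) -> forall j i, 0 <= w j i.
Proof. by move=> ws j i; have [/(_ i) /andP[]] := ws j. Qed.

Section ParamBox.
Variables (R : realType) (m' k : nat).
Local Notation m := m'.+2.
Local Notation d := m'.+1.
Local Notation param := ('I_k -> 'I_m -> R).
Variables (ws : param) (al : R).
Hypothesis hws : forall j, @simplex R m (ws j).
Hypothesis hal : 0 < al <= 1.

Definition ws_nat (j i : nat) : R :=
  match (insub j : option 'I_k), (insub i : option 'I_m) with
  | Some j', Some i' => ws j' i'
  | _, _ => 0
  end.

(* The box around [ws]: coordinate [j * d + i] ranges over
   [(1 - al) * ws j i, (1 - al) * ws j i + al / d]. *)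
Definition box_lo (idx : nat) : R := (1 - al) * ws_nat (idx %/ d) (idx %% d).

Lemma ws_nat_bounds j i : 0 <= ws_nat j i <= 1.
Proof.
rewrite /ws_nat; case: (insub j) => [j'|]; last by rewrite lexx ler01.
by case: (insub i) => [i'|]; [have [] := hws j'|rewrite lexx ler01].
Qed.

Lemma box_in_cube idx : 0 <= box_lo idx <= box_lo idx + al / d%:R /\ box_lo idx + al / d%:R <= 1.
Proof.
have dpos : 0 < d%:R :> R by rewrite ltr0n.
have hd0 : 0 <= al / d%:R by rewrite divr_ge0 // ltW //; case/andP: hal.
have hd : al / d%:R <= al by rewrite ler_pdivrMr // ler_peMr ?ler1n //; case/andP: hal => /ltW.
have /andP[w0 w1] := ws_nat_bounds (idx %/ d) (idx %% d).
rewrite /box_lo lerDl hd0 andbT; case/andP: hal => al0 al1.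
split; first by rewrite mulr_ge0 // subr_ge0.
by move: (ws_nat _ _) (al / d%:R) w0 w1 hd hd0 => w x *; nra.
Qed.

Lemma box_loE (j : 'I_k) (i : 'I_d) : box_lo (j * d + i) = (1 - al) * ws j (widen_ord (leqnSn d) i).
Proof.
rewrite /box_lo divnMDl // divn_small // addn0 modnMDl modn_small //.
by rewrite -[i : nat]/(widen_ord (leqnSn d) i : nat) /ws_nat !valK.
Qed.

Lemma box_param_ge s : size s = (k * d)%N ->
  (forall idx, (idx < k * d)%N -> box_lo idx <= nth 0 s idx <= box_lo idx + al / d%:R) ->
  in_charts m' k s /\ forall j i, (1 - al) * ws j i <= cube_param s j i.
Proof.
move=> hs hbox; case/andP: hal => al0 al1.
have hji (j : 'I_k) (i : 'I_d) : (j * d + i < k * d)%N.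
  apply: (@leq_trans (j * d + d)); first by rewrite ltn_add2l.
  by rewrite -mulSnr leq_mul2r ltn_ord orbT.
pose wl j (i : 'I_d) := ws j (widen_ord (leqnSn d) i).
have hb (j : 'I_k) (i : 'I_d) : (1 - al) * wl j i <= nth 0 s (j * d + i) <= (1 - al) * wl j i + al / d%:R.
  by rewrite -box_loE hbox.
have hsum (j : 'I_k) : \sum_(i < d) nth 0 s (j * d + i) <= (1 - al) * \sum_(i < d) wl j i + al.
  apply: le_trans (_ : \sum_(i < d) ((1 - al) * wl j i + al / d%:R) <= _).
    by apply: ler_sum => i _; case/andP: (hb j i).
  rewrite big_split /= -mulr_sumr sumr_const card_ord.
  by rewrite -[al / _ *+ _]mulr_natr mulfVK // pnatr_eq0.
have hws_sum (j : 'I_k) : \sum_(i < d) wl j i + ws j ord_max = 1.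
  by have [_ <-] := hws j; rewrite [RHS]big_ord_recr.
have ws0 := simplex_params_ge0 hws.
have hC : in_charts m' k s.
  apply/(in_chartsP hs) => j hj; apply/andP; split.
    apply: le_trans (hsum (Ordinal hj)) _.
    by have := hws_sum (Ordinal hj); have := ws0 (Ordinal hj) ord_max; nra.
  apply/forallP => i; case/andP: (hb (Ordinal hj) i) => + _; apply: le_trans.
  by rewrite mulr_ge0 ?subr_ge0 ?ws0.
split=> // j i; rewrite cube_paramE // /block_param; case: ltnP => hi.
  have -> : i = widen_ord (leqnSn d) (Ordinal hi) by exact: val_inj.
  by case/andP: (hb j (Ordinal hi)).
have -> : i = ord_max by apply: val_inj; apply/eqP; rewrite eqn_leq -ltnS ltn_ord.
by have := hsum j; have := hws_sum j; nra.
Qed.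

Lemma box_volume : \prod_(idx < k * d) (box_lo idx + al / d%:R - box_lo idx) = (al / d%:R) ^+ (k * d).
Proof. by rewrite (eq_bigr (fun _ => al / d%:R)) ?prodr_const ?card_ord // => i _; rewrite addrC addKr. Qed.

End ParamBox.

Section ParamIntegral.
Variables (R : realType) (m' k : nat).
Local Notation m := m'.+2.
Local Notation d := m'.+1.
Local Notation param := ('I_k -> 'I_m -> R).
Local Open Scope ereal_scope.

Definition param_int (h : param -> R) : \bar R := @paramW_int R m k (fun w => (h w)%:E).

Lemma param_int_bounds h B : param_measurable h ->
  (forall w, (forall j i, (0 <= w j i)%R) -> (0 <= h w)%R) ->
  (0 <= B)%R -> (forall w, (forall j, @simplex R m (w j)) -> (h w <= B)%R) ->
  0 <= param_int h <= B%:E.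
Proof.
move=> mh h0 B0 hB; rewrite /param_int paramW_int_cube; apply/andP; split.
  by apply: cube_int_ge0 => s; rewrite lee_fin cube_pullback_ge0.
rewrite -(cube_int_cst (k * d) B).
apply: (le_cube_int (F := fun _ s => cube_pullback h s) (G := fun _ _ => B) (t := tt)).
- exact: jmeasurable_cube_pullback.
- exact: jmeasurable_const.
- by move=> _ s; exact: cube_pullback_ge0.
- by [].
- move=> s _; rewrite /cube_pullback; case: ifP => // hC; apply: hB => j.
  exact: (chart_params_simplex hC (ltn_ord j)).
Qed.

Lemma param_int_fin_num h B : param_measurable h ->
  (forall w, (forall j i, (0 <= w j i)%R) -> (0 <= h w)%R) ->
  (0 <= B)%R -> (forall w, (forall j, @simplex R m (w j)) -> (h w <= B)%R) ->
  param_int h \is a fin_num.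
Proof.
move=> mh h0 B0 hB; have /andP[H1 H2] := param_int_bounds mh h0 B0 hB.
by rewrite ge0_fin_numE // (le_lt_trans H2) // ltry.
Qed.

Lemma param_int_sum (I : finType) (c : I -> R) (h : I -> param -> R) :
  (forall i, (0 <= c i)%R) -> (forall i, param_measurable (h i)) ->
  (forall i w, (forall j i, (0 <= w j i)%R) -> (0 <= h i w)%R) ->
  param_int (fun w => \sum_i c i * h i w)%R = \sum_i (c i)%:E * param_int (h i).
Proof.
move=> c0 mh h0; rewrite /param_int paramW_int_cube.
under eq_bigr do rewrite paramW_int_cube.
rewrite -(cube_int_sum (index_enum I) (F := fun i _ s => cube_pullback (h i) s) tt) //.
- apply: eq_cube_int => s _; congr (_%:E); rewrite /cube_pullback; case: ifP => // _.
  by rewrite big1 // => i _; rewrite mulr0.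
- by move=> i; exact: jmeasurable_cube_pullback.
- by move=> i _ s; exact: (cube_pullback_ge0 (h0 i) s).
Qed.

Lemma param_int_lb h (ws : param) (al c : R) : param_measurable h ->
  (forall w, (forall j i, (0 <= w j i)%R) -> (0 <= h w)%R) ->
  (forall j, @simplex R m (ws j)) -> (0 < al <= 1)%R -> (0 <= c)%R ->
  (forall w, (forall j i, (1 - al) * ws j i <= w j i)%R -> (c <= h w)%R) ->
  (c * (al / d%:R) ^+ (k * d))%:E <= param_int h.
Proof.
move=> mh h0 hws hal c0 hc.
rewrite /param_int paramW_int_cube -(box_volume ws al).
apply: (cube_int_box (t := tt) (jmeasurable_cube_pullback mh) (fun _ s => cube_pullback_ge0 h0 s)
  c0 (box_in_cube hws hal)) => s hs hbox.
by have [hC hw] := box_param_ge hws hal hs hbox; rewrite /cube_pullback hC; apply: hc.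
Qed.

End ParamIntegral.

Section RealInequalities.
Variable R : realType.

Lemma bernoulli_ineq (a : R) n : 0 <= a <= 1 -> 1 - n%:R * a <= (1 - a) ^+ n.
Proof.
move=> /andP[a0 a1]; elim: n => [|n IH]; first by rewrite mul0r subr0 expr0.
rewrite exprSr -natr1.
have a1' : 0 <= 1 - a by lra.
have := ler_wpM2r a1' IH; move: ((1 - a) ^+ n) => y.
by have := mulr_ge0 (ler0n R n) (mulr_ge0 a0 a0); nra.
Qed.

Lemma ln_le2sqrt (M : R) : 0 < M -> ln M <= 2 * Num.sqrt M.
Proof.
move=> M0; have s0 : 0 < Num.sqrt M by rewrite sqrtr_gt0.
rewrite -{1}(sqr_sqrtr (ltW M0)) lnXn // mulr2n mulrDl mul1r.
by apply: lerD; apply: ltW; exact: ln_sublinear.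
Qed.

Lemma ln_div_le_sqrt (a : R) n : 0 < a -> (0 < n)%N ->
  ln (a * n.+1%:R) / n%:R <= 4 * Num.sqrt (a / n.+1%:R).
Proof.
move=> a0 n0; have n1 : 1 <= n%:R :> R by rewrite ler1n.
have nS : n.+1%:R = n%:R + 1 :> R by rewrite -natr1.
have sq : Num.sqrt (a * n.+1%:R) = Num.sqrt (a / n.+1%:R) * n.+1%:R.
  have -> : a * n.+1%:R = a / n.+1%:R * n.+1%:R ^+ 2 by rewrite expr2 mulrA divfK.
  by rewrite sqrtrM ?divr_ge0 ?ltW // sqrtr_sqr ger0_norm.
rewrite ler_pdivrMr ?ltr0n //; apply: le_trans (ln_le2sqrt _) _.
  by rewrite mulr_gt0 ?ltr0n.
rewrite sq; have := sqrtr_ge0 (a / n.+1%:R); move: (Num.sqrt _) => r r0.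
by rewrite nS; nra.
Qed.

End RealInequalities.

Definition regret_bound (R : realType) (k m' n : nat) : R :=
  (k * m'.+1).+2%:R * 4 * Num.sqrt (m'.+1%:R / n.+1%:R).

Section UniversalCRPside.
Variables (R : realType) (m' k q : nat).
Local Notation m := m'.+2.
Local Notation d := m'.+1.
Local Notation param := ('I_k -> 'I_m -> R).
Variables (v : nat -> 'I_q -> R) (f : ('I_q -> R) -> 'I_k -> R).
Hypothesis f01 : forall z j, 0 <= f z j <= 1.
Hypothesis sum_f : forall z, \sum_(j < k) f z j = 1.
Variable eps : R.
Hypothesis eps01 : 0 < eps < 1.
Variable x : market R m.
Hypothesis x_gt0 : market_ok x.

Local Notation S := (@CRP_side R m k q v f).
Local Notation Se := (eps_mod eps S).

Definition mix (t : nat) : R := eps / (2 * t.+1%:R ^+ 2).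

Lemma mix_bounds t : 0 <= mix t <= 1 / 2.
Proof.
rewrite /mix; have hu : 1 <= t.+1%:R ^+ 2 :> R by rewrite exprn_ege1 // ler1n.
move: (t.+1%:R ^+ 2) hu => u hu; case/andP: eps01 => e0 e1.
have h2 : 0 < 2 * u by lra.
apply/andP; split; first by rewrite divr_ge0 // ltW.
by rewrite ler_pdivrMr //; nra.
Qed.

Lemma eps_modE t w i : Se t w i = (1 - mix t) * S t w i + mix t / m%:R.
Proof.
rewrite /eps_mod /mix; congr (_ + _); field.
by have := ler0n R m'; have := ler0n R t; move=> *; apply/andP; split; apply/eqP; lra.
Qed.

Lemma CRP_side_ge0 t (w : param) i : (forall j i, 0 <= w j i) -> 0 <= S t w i.
Proof.
move=> w0; apply: sumr_ge0 => j _; rewrite mulr_ge0 //.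
by case/andP: (f01 (v t) j).
Qed.

Lemma CRP_side_le1 t (w : param) i : (forall j, simplex (w j)) -> S t w i <= 1.
Proof.
move=> ws; rewrite -(sum_f (v t)); apply: ler_sum => j _.
have [/(_ i) /andP[_ w1] _] := ws j; have /andP[f0 _] := f01 (v t) j.
by rewrite ler_piMr.
Qed.

Lemma CRP_side_simplex t (w : param) : (forall j, simplex (w j)) -> \sum_(i < m) S t w i = 1.
Proof.
move=> ws; rewrite /CRP_side exchange_big /= -(sum_f (v t)); apply: eq_bigr => j _.
by rewrite -mulr_sumr; have [_ ->] := ws j; rewrite mulr1.
Qed.

Lemma eps_mod_ge0 t (w : param) i : (forall j i, 0 <= w j i) -> 0 <= Se t w i.
Proof.
move=> w0; have /andP[c0 c1] := mix_bounds t.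
by rewrite eps_modE addr_ge0 ?(divr_ge0 c0) // mulr_ge0 ?CRP_side_ge0 //; lra.
Qed.

Lemma eps_mod_le1 t (w : param) i : (forall j, simplex (w j)) -> Se t w i <= 1.
Proof.
move=> ws; rewrite eps_modE; have /andP[c0 c1] := mix_bounds t.
have hm : mix t / m%:R <= mix t by rewrite ler_pdivrMr ?ltr0n // ler_peMr // ler1n.
have := CRP_side_le1 t i ws; have := CRP_side_ge0 t i (simplex_params_ge0 ws).
by move: (S t w i) (mix t / m%:R) hm => y z hm y0 y1; nra.
Qed.

Definition wealth_mod t (w : param) : R := wealth x (at_param Se w) t.
Definition weighted_mod t i (w : param) : R := Se t w i * wealth_mod t w.
Definition wealth_side t (w : param) : R := wealth x (at_param S w) t.
Definition market_total t : R := \prod_(tau < t) \sum_(i < m) x tau i.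
Definition mix_keep t : R := \prod_(tau < t) (1 - mix tau).

Lemma param_measurable_eps_mod t i : param_measurable (fun w : param => Se t w i).
Proof.
apply: param_measurableD; last exact: param_measurable_cst.
apply: param_measurableM; first exact: param_measurable_cst.
apply: param_measurable_sum => j.
by apply: param_measurableM; [exact: param_measurable_cst|exact: param_measurable_coord].
Qed.

Lemma param_measurable_wealth_mod t : param_measurable (wealth_mod t).
Proof.
apply: param_measurable_prod => tau; apply: param_measurable_sum => i.
by apply: param_measurableM; [exact: param_measurable_eps_mod|exact: param_measurable_cst].
Qed.

Lemma param_measurable_weighted_mod t i : param_measurable (weighted_mod t i).
Proof.
by apply: param_measurableM; [exact: param_measurable_eps_mod|exact: param_measurable_wealth_mod].
Qed.

Lemma wealth_mod_ge0 t (w : param) : (forall j i, 0 <= w j i) -> 0 <= wealth_mod t w.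
Proof.
move=> w0; apply: prodr_ge0 => tau _; apply: sumr_ge0 => i _.
by rewrite mulr_ge0 ?eps_mod_ge0 // ltW.
Qed.

Lemma weighted_mod_ge0 t i (w : param) : (forall j i, 0 <= w j i) -> 0 <= weighted_mod t i w.
Proof. by move=> w0; rewrite mulr_ge0 ?eps_mod_ge0 ?wealth_mod_ge0. Qed.

Lemma wealth_mod_le t (w : param) : (forall j, simplex (w j)) -> wealth_mod t w <= market_total t.
Proof.
move=> ws; apply: ler_prod => tau _; apply/andP; split.
  apply: sumr_ge0 => i _; apply: mulr_ge0; last exact: ltW.
  exact: (eps_mod_ge0 _ _ (simplex_params_ge0 ws)).
by apply: ler_sum => i _; rewrite ler_piMl ?eps_mod_le1 ?ltW.
Qed.

Lemma weighted_mod_le t i (w : param) : (forall j, simplex (w j)) -> weighted_mod t i w <= market_total t.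
Proof.
move=> ws; apply: le_trans (wealth_mod_le t ws).
apply: ler_piMl; first exact: (wealth_mod_ge0 _ (simplex_params_ge0 ws)).
exact: eps_mod_le1.
Qed.

Lemma market_total_ge0 t : 0 <= market_total t.
Proof. by apply: prodr_ge0 => tau _; apply: sumr_ge0 => i _; exact: ltW. Qed.

Lemma wealth_mod_fin_num t : param_int (wealth_mod t) \is a fin_num.
Proof.
exact: param_int_fin_num (param_measurable_wealth_mod t) (@wealth_mod_ge0 t)
  (market_total_ge0 t) (@wealth_mod_le t).
Qed.

Lemma weighted_mod_fin_num t i : param_int (weighted_mod t i) \is a fin_num.
Proof.
exact: param_int_fin_num (param_measurable_weighted_mod t i) (@weighted_mod_ge0 t i)
  (market_total_ge0 t) (@weighted_mod_le t i).
Qed.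

Lemma wealth_side_gt0 t (w : param) : (forall j, simplex (w j)) -> 0 < wealth_side t w.
Proof.
move=> ws; have w0 := simplex_params_ge0 ws; apply: prodr_gt0 => tau _.
have term0 i : 0 <= S tau w i * x tau i by rewrite mulr_ge0 ?CRP_side_ge0 // ltW.
rewrite /dotp lt_def (sumr_ge0 _ (fun i _ => term0 i)) andbT.
apply/eqP => /(psumr_eq0P (fun i _ => term0 i)) h0.
suff : \sum_(i < m) S tau w i = 0 by rewrite CRP_side_simplex // => /eqP; rewrite oner_eq0.
apply: big1 => i _; have /eqP := h0 i isT.
by rewrite mulf_eq0 (gt_eqF (x_gt0 tau i)) orbF => /eqP.
Qed.

Lemma wealth_mod_lb t (ws w : param) al : (forall j, simplex (ws j)) -> 0 <= al <= 1 ->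
  (forall j i, (1 - al) * ws j i <= w j i) ->
  (1 - al) ^+ t * mix_keep t * wealth_side t ws <= wealth_mod t w.
Proof.
move=> hws /andP[al0 al1] hw; have ws0 := simplex_params_ge0 hws.
have -> : (1 - al) ^+ t = \prod_(tau < t) (1 - al) by rewrite prodr_const card_ord.
rewrite /mix_keep /wealth_side /wealth_mod /wealth -!big_split /=.
apply: ler_prod => tau _; have /andP[c0 c1] := mix_bounds tau; apply/andP; split.
  rewrite !mulr_ge0 ?subr_ge0 //; first by lra.
  by apply: sumr_ge0 => i _; rewrite mulr_ge0 ?CRP_side_ge0 // ltW.
rewrite /dotp /at_param !mulr_sumr; apply: ler_sum => i _.
rewrite !mulrA; apply: ler_wpM2r; first exact: ltW.
rewrite eps_modE -mulrA [(1 - al) * _]mulrC -mulrA [_ * (1 - al)]mulrC.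
rewrite -[X in X <= _]addr0; apply: lerD; last by rewrite divr_ge0.
apply: ler_wpM2l; first by lra.
rewrite /CRP_side mulr_sumr; apply: ler_sum => j _.
by rewrite mulrCA ler_wpM2l //; case/andP: (f01 (v tau) j).
Qed.

Lemma mix_keep_gt0 t : 0 < mix_keep t.
Proof. by apply: prodr_gt0 => tau _; have /andP[_ h] := mix_bounds tau; lra. Qed.

Lemma mix_keep_lb n : n.+1%:R^-1 <= mix_keep n.
Proof.
elim: n => [|n IH]; first by rewrite /mix_keep big_ord0 invr1.
rewrite /mix_keep big_ord_recr /= -/(mix_keep n) -natr1.
have u1 : 1 <= n.+1%:R :> R by rewrite ler1n.
have /andP[c0 _] := mix_bounds n.
have hmix : mix n * (n.+1%:R + 1) <= 1.
  have hct : mix n * (2 * n.+1%:R ^+ 2) = eps by rewrite /mix divfK // mulf_neq0 // expf_neq0 // pnatr_eq0.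
  have : mix n * (n.+1%:R + 1) <= mix n * (2 * n.+1%:R ^+ 2) by rewrite ler_wpM2l //; nra.
  by rewrite hct; case/andP: eps01 => _ /ltW; lra.
apply: le_trans (ler_wpM2r _ IH); last by have /andP[_ h] := mix_bounds n; lra.
move: (n.+1%:R) u1 hmix => u u1 hmix.
have -> : (u + 1)^-1 = u^-1 * (u / (u + 1)) by rewrite mulrA mulVf ?mul1r // gt_eqF //; lra.
by rewrite ler_wpM2l ?invr_ge0 ?ler_pdivrMr; [| lra | nra | lra].
Qed.

Definition mean_wealth t : R := fine (param_int (wealth_mod t)).

Lemma wealth_mod_succ t (w : param) : wealth_mod t.+1 w = \sum_(i < m) x t i * weighted_mod t i w.
Proof.
rewrite /weighted_mod /wealth_mod /wealth big_ord_recr /= /dotp /at_param mulr_sumr.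
by apply: eq_bigr => i _; ring.
Qed.

Lemma mean_wealth_succ t : mean_wealth t.+1 = \sum_(i < m) x t i * fine (param_int (weighted_mod t i)).
Proof.
rewrite /mean_wealth (_ : wealth_mod t.+1 = fun w => \sum_(i < m) x t i * weighted_mod t i w).
  rewrite param_int_sum; last 3 first.
  - by move=> i; exact: ltW.
  - by move=> i; exact: param_measurable_weighted_mod.
  - by move=> i w; exact: weighted_mod_ge0.
  rewrite -sum_fine; last by move=> i _; rewrite fin_numM ?weighted_mod_fin_num.
  by apply: eq_bigr => i _; rewrite fineM ?weighted_mod_fin_num.
by apply/funext => w; exact: wealth_mod_succ.
Qed.

Lemma mean_wealth_lb n (ws : param) : (forall j, simplex (ws j)) ->
  wealth_side n ws * (d%:R * n.+1%:R)^-1 ^+ (k * d).+2 <= mean_wealth n.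
Proof.
move=> hws; set al : R := n.+1%:R^-1; set M := d%:R * n.+1%:R.
have al0 : 0 < al by rewrite invr_gt0.
have al1 : al <= 1 by rewrite invf_le1 ?ler1n.
have Mi_al : M^-1 = al / d%:R by rewrite /M invfM mulrC.
have Mi_le : M^-1 <= al by rewrite Mi_al ler_pdivrMr ?ltr0n // ler_peMr ?ler1n // ltW.
have hal : 0 < al <= 1 by rewrite al0 al1.
have hal' : 0 <= al <= 1 by rewrite ltW.
have Mi_le_pow : M^-1 <= (1 - al) ^+ n.
  apply: le_trans Mi_le (le_trans _ (bernoulli_ineq n hal')).
  have : (n%:R + 1) * al = 1 by rewrite natr1 mulfV // pnatr_eq0.
  by rewrite mulrDl mul1r; nra.
have Mi_le_keep : M^-1 <= mix_keep n := le_trans Mi_le (mix_keep_lb n).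
have WS0 := wealth_side_gt0 n hws.
have c0 : 0 <= (1 - al) ^+ n * mix_keep n * wealth_side n ws.
  rewrite !mulr_ge0 ?exprn_ge0 ?subr_ge0 // ltW //; exact: mix_keep_gt0.
have := param_int_lb (param_measurable_wealth_mod n) (@wealth_mod_ge0 n) hws hal c0
  (fun w => @wealth_mod_lb n ws w al hws hal').
rewrite /mean_wealth -(fineK (wealth_mod_fin_num n)) lee_fin; apply: le_trans.
rewrite -Mi_al !exprS.
have -> : wealth_side n ws * (M^-1 * (M^-1 * M^-1 ^+ (k * d))) =
          M^-1 * M^-1 * wealth_side n ws * M^-1 ^+ (k * d) by ring.
have Mi0 : 0 <= M^-1 by rewrite invr_ge0 mulr_ge0.
apply: ler_wpM2r; first exact: exprn_ge0.
apply: ler_wpM2r; first exact: ltW.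
exact: ler_pM.
Qed.

Definition vertex0 : param := fun _ i => (i == ord0)%:R.

Lemma vertex0_simplex j : simplex (vertex0 j).
Proof.
split=> [i|]; first by rewrite /vertex0; case: (i == ord0); rewrite ?lexx ?ler01.
by rewrite (bigD1 ord0) //= /vertex0 eqxx big1 ?addr0 // => i /negbTE ->.
Qed.

Lemma mean_wealth_gt0 t : 0 < mean_wealth t.
Proof.
apply: lt_le_trans (mean_wealth_lb t vertex0_simplex).
by rewrite mulr_gt0 ?wealth_side_gt0 ?exprn_gt0 ?invr_gt0 ?mulr_gt0 ?ltr0n //; exact: vertex0_simplex.
Qed.

Lemma mean_wealth0_le1 : mean_wealth 0 <= 1.
Proof.
have /andP[_] := param_int_bounds (param_measurable_wealth_mod 0) (@wealth_mod_ge0 0)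
  (market_total_ge0 0) (@wealth_mod_le 0).
by rewrite -lee_fin /mean_wealth fineK ?wealth_mod_fin_num // /market_total big_ord0.
Qed.

Lemma unif_int_param_int h : @unif_int R m k (fun w => (h w)%:E) = (param_int h * (mean_wealth 0)^-1%:E)%E.
Proof.
rewrite /unif_int /mean_wealth; congr (_ * (fine _)^-1%:E)%E.
by congr paramW_int; apply/funext => w; rewrite /wealth_mod /wealth big_ord0.
Qed.

Lemma univ_eps_modE t i : univ Se x t i = fine (param_int (weighted_mod t i)) / mean_wealth t.
Proof.
rewrite /univ (unif_int_param_int (weighted_mod t i)) (unif_int_param_int (wealth_mod t)).
rewrite !fineM ?weighted_mod_fin_num ?wealth_mod_fin_num //= -/(mean_wealth t).
by have := mean_wealth_gt0 0; have := mean_wealth_gt0 t; move=> *; field; rewrite !gt_eqF.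
Qed.

Lemma wealth_univ n : wealth x (univ Se x) n = mean_wealth n / mean_wealth 0.
Proof.
elim: n => [|n IH]; first by rewrite /wealth big_ord0 divff // gt_eqF // mean_wealth_gt0.
rewrite /wealth big_ord_recr /= -/(wealth x (univ Se x) n) IH /dotp.
rewrite (eq_bigr (fun i => x n i * fine (param_int (weighted_mod n i)) / mean_wealth n)).
  rewrite -mulr_suml -mean_wealth_succ.
  by have := mean_wealth_gt0 0; have := mean_wealth_gt0 n; move=> *; field; rewrite !gt_eqF.
by move=> i _; rewrite univ_eps_modE; ring.
Qed.

Lemma growth_univ_lb n (ws : param) : (0 < n)%N -> (forall j, simplex (ws j)) ->
  growth x (at_param S ws) n <= growth x (univ Se x) n + regret_bound R k m' n.
Proof.
move=> n0 hws; set e := (k * d).+2; set M : R := d%:R * n.+1%:R.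
have M0 : 0 < M by rewrite mulr_gt0 ?ltr0n.
have W0 := wealth_side_gt0 n hws.
have hU : wealth_side n ws * M^-1 ^+ e <= wealth x (univ Se x) n.
  apply: le_trans (mean_wealth_lb n hws) _.
  rewrite wealth_univ ler_pdivlMr ?mean_wealth_gt0 // ler_piMr ?mean_wealth0_le1 //.
  exact/ltW/mean_wealth_gt0.
have hln : ln (wealth_side n ws) - e%:R * ln M <= ln (wealth x (univ Se x) n).
  have P : 0 < wealth_side n ws * M^-1 ^+ e by rewrite mulr_gt0 ?exprn_gt0 ?invr_gt0.
  have -> : ln (wealth_side n ws) - e%:R * ln M = ln (wealth_side n ws * M^-1 ^+ e).
    rewrite lnM ?posrE ?exprn_gt0 ?invr_gt0 // lnXn ?invr_gt0 // lnV ?posrE //.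
    by rewrite -mulr_natr; ring.
  by rewrite ler_ln ?posrE // (lt_le_trans P).
have np : 0 < n%:R :> R by rewrite ltr0n.
have hM := ln_div_le_sqrt (ltr0n R d) n0.
rewrite /growth /regret_bound -/e -/(wealth_side n ws) -mulrA.
apply: le_trans (_ : _ <= ln (wealth x (univ Se x) n) / n%:R + e%:R * (ln M / n%:R)) _.
  rewrite mulrA -mulrDl; apply: ler_wpM2r; [by rewrite invr_ge0 ltW | lra].
by rewrite lerD2l; apply: ler_wpM2l; [exact: ler0n | exact: hM].
Qed.

End UniversalCRPside.

Lemma regret_bound_cvg (R : realType) k m' : regret_bound R k m' @ \oo --> 0.
Proof.
rewrite /regret_bound.
have h : (fun n : nat => Num.sqrt (m'.+1%:R * harmonic n)) @ \oo --> (Num.sqrt (m'.+1%:R * 0) : R).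
  apply: continuous_cvg; first exact: sqrt_continuous.
  by apply: cvgM; [exact: cvg_cst | exact: cvg_harmonic].
rewrite mulr0 sqrtr0 in h.
rewrite -(mulr0 ((k * m'.+1).+2%:R * 4 : R)).
by apply: cvgM; first exact: cvg_cst.
Qed.

Theorem CRP_side_universalizable (R : realType) m' k q (v : nat -> 'I_q -> R)
    (f : ('I_q -> R) -> 'I_k -> R) :
  (forall z j, 0 <= f z j <= 1) -> (forall z, \sum_(j < k) f z j = 1) ->
  universalizable (@CRP_side R m'.+2 k q v f).
Proof.
move=> f01 sum_f eps eps01; exists (regret_bound R k m'); split; first exact: regret_bound_cvg.
move=> x x_gt0 n n0; rewrite leeBlDr //; apply: ge_ereal_sup => _ [w hw <-].
by rewrite -EFinD lee_fin; exact: growth_univ_lb.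
Qed.

Lemma CRP_as_CRP_side (R : realType) m : @CRP R m = @CRP_side R m 1 0 (fun _ _ => 0) (fun _ _ => 1).
Proof.
apply/funext => t; apply/funext => w; apply/funext => i.
by rewrite /CRP /CRP_side big_ord1 mul1r.
Qed.

Unset Implicit Arguments.

Theorem mainTheorem8 (R : realType) (m : nat) (hm : (2 <= m)%N) :
  universalizable (@CRP R m) /\
  (forall (k q : nat), (1 <= k)%N ->
   forall (v : nat -> 'I_q -> R) (f : ('I_q -> R) -> 'I_k -> R),
     (forall z j, 0 <= f z j <= 1) ->
     (forall z, \sum_(j < k) f z j = 1) ->
     universalizable (@CRP_side R m k q v f)).
Proof.
case: m hm => [|[|m']] // _; split.
  by rewrite CRP_as_CRP_side; apply: CRP_side_universalizable => [z j|z]; rewrite ?ler01 ?lexx ?big_ord1.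
by move=> k q _ v f; exact: CRP_side_universalizable.
Qed.
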